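(* If $w$ is an infinite word over a finite alphabet $A$ and $H$ is a graph on $A$ with loops allowed, then the class $\mathcal{P}(w,H)$ is above the Bell number.
   Context: Words over $A$ are maps $w:S\to A$ with $S=\{1,\dots,n\}$ or $\mathbb{N}$, $w_i=w(i)$. For positive integers $u_1<\dots<u_m$, $G_{w,H}(u_1,\dots,u_m)$ is the graph on $\{u_1,\dots,u_m\}$ in which $u_iu_j$ is an edge iff ($|u_i-u_j|=1$ and $w_{u_i}w_{u_j}\notin E(H)$) or ($|u_i-u_j|>1$ and $w_{u_i}w_{u_j}\in E(H)$) (for equal letters $a$ this refers to a loop at $a$). $\mathcal{P}(w,H)$ is the hereditary class of all graphs isomorphic to some $G_{w,H}(u_1,\dots,u_m)$. A hereditary class is above the Bell number if the number of its graphs on vertex set $\{1,\dots,n\}$ is at least $n^{(1-o(1))n}$ (equivalently, at least the Bell number $B_n$). *)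

From mathcomp Require Import all_boot.
Set Implicit Arguments. Unset Strict Implicit. Unset Printing Implicit Defensive.

Definition consecutive (x y : nat) : bool := (x.+1 == y) || (y.+1 == x).

Definition wH_adj (A : Type) (w : nat -> A) (H : rel A) (x y : nat) : bool :=
  (consecutive x y && ~~ H (w x) (w y)) ||
  [&& x != y, ~~ consecutive x y & H (w x) (w y)].

(* A labelled graph on vertex set {1..n} (encoded as 'I_n), given by its set of
   ordered adjacent pairs, belongs to P(w,H) iff it is isomorphic to
   G_{w,H}(u_1,...,u_n) for some distinct positive integers u_i
   (the isomorphism being i |-> u i). *)
Definition in_P (A : Type) (w : nat -> A) (H : rel A) (n : nat)
  (g : {set 'I_n * 'I_n}) : Prop :=
  exists u : 'I_n -> nat,
    injective u /\ (forall i, 0 < u i) /\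
    (forall i j, ((i, j) \in g) = (i != j) && wH_adj w H (u i) (u j)).

(* A hereditary class (given by its labelled members on {1..n}) is above the
   Bell number: the number of its graphs on {1..n} is at least n^((1-o(1))n),
   i.e. for every k >= 1, eventually  count_n >= n^((1-1/k) n),
   written without reals as  count_n ^ k >= n ^ ((k-1) n). *)
Definition above_Bell (P : forall n : nat, {set 'I_n * 'I_n} -> Prop) : Prop :=
  forall k : nat, 0 < k ->
    exists N : nat, forall n : nat, N <= n ->
      exists S : {set {set 'I_n * 'I_n}},
        (forall g, g \in S -> P n g) /\ n ^ ((k - 1) * n) <= #|S| ^ k.

(* Fix a factor x of w of length l + 1 that occurs infinitely often, and
   occurrences of it far apart from each other.  Arrange l + 1 columns of m
   vertices and send row c of column s to the s-th letter of occurrence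
   sigma_s(c), where sigma_0 = id and sigma_1, ..., sigma_l are arbitrary
   permutations.  Two vertices of consecutive columns land on consecutive
   positions exactly when they use the same occurrence, so the edges between
   columns s and s + 1 determine sigma_s^-1 sigma_(s+1); hence the (m!)^l
   choices give distinct graphs of P(w,H).  With l = 2k and m about
   n / (2k + 1) this exceeds n^((1 - 1/k) n). *)

From mathcomp Require Import all_boot all_fingroup zify.
From Stdlib Require Import Classical.
Set Implicit Arguments. Unset Strict Implicit. Unset Printing Implicit Defensive.

Lemma leq_exp_base m n e : m <= n -> m ^ e <= n ^ e.
Proof. by move=> le_mn; elim: e => // e IH; rewrite !expnS leq_mul. Qed.

Lemma expn_sub_leq_fact d m : d <= m -> d ^ (m - d) <= m`!.
Proof.
elim: m => [|m IH]; first by rewrite leqn0 => /eqP ->.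
rewrite leq_eqVlt => /predU1P [-> | lt_dm]; first by rewrite subnn fact_gt0.
rewrite subSn // expnS factS; apply: leq_mul; [exact: ltnW | exact: IH].
Qed.

Lemma exp_linear_bound k X : 0 < X ->
  exists2 Q, 0 < Q & forall q n, Q <= q -> n < q.+1 * X ->
    n ^ (k * n) <= q ^ (k * X * q + 2 * q).
Proof.
move=> X_gt0; pose C := 2 * X; pose a := k * X.
exists (C ^ (2 * a) + a.+1); first by rewrite addnS.
move=> q n le_Qq lt_n.
have q_gt0 : 0 < q by lia.
have le_nCq : n <= C * q by rewrite /C; nia.
have C_small : C ^ (a * q.+1) <= q ^ q.
  apply: (@leq_trans ((C ^ (2 * a)) ^ q)).
    by rewrite -expnM leq_pexp2l ?muln_gt0 //; nia.
  by apply: leq_exp_base; lia.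
have q_small : q ^ (a * q.+1) <= q ^ (a * q + q).
  by rewrite leq_pexp2l // mulnS addnC leq_add2l; lia.
apply: (@leq_trans ((C * q) ^ (a * q.+1))).
  apply: leq_trans (leq_exp_base _ le_nCq) _.
  by rewrite leq_pexp2l ?muln_gt0 //; nia.
rewrite expnMn (_ : k * X * q + 2 * q = q + (a * q + q)); last by rewrite /a; lia.
by rewrite expnD leq_mul.
Qed.

Lemma bell_parameters k : 0 < k ->
  exists N, forall n, N <= n -> exists l m,
    [/\ 0 < m, l.+1 * m <= n & n ^ ((k - 1) * n) <= (m`! ^ l) ^ k].
Proof.
case: k => // k _; rewrite subn1 succnK.
pose r := 2 * k.+1; pose X := r.+1 * r.
have X_gt0 : 0 < X by [].
have [Q Q_gt0 HQ] := exp_linear_bound k X_gt0.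
exists (Q * X) => n le_n; pose q := n %/ X.
have le_Qq : Q <= q by rewrite leq_divRL.
have q_gt0 : 0 < q by lia.
exists r, (r * q); split; first by rewrite muln_gt0 q_gt0.
  by rewrite mulnA mulnC leq_divM.
apply: leq_trans (HQ q n le_Qq (ltn_ceil n X_gt0)) _.
have fact_q : q ^ (r.-1 * q) <= (r * q)`!.
  by rewrite -[r.-1 * q](_ : r * q - q = _) ?expn_sub_leq_fact /r; nia.
apply: leq_trans (leq_exp_base k.+1 (leq_exp_base r fact_q)).
(* (r - 1) r (k + 1) = k (r + 1) r + r: the surplus [r * q] pays for [2 * q]. *)
by rewrite -!expnM leq_pexp2l // /X /r; nia.
Qed.

Lemma infinite_pigeonhole (T : finType) (f : nat -> T) :
  exists y, forall N, exists2 p, N <= p & f p == y.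
Proof.
apply: NNPP => none.
have bounded y : exists N, forall p, N <= p -> f p != y.
  apply: NNPP => unbounded; apply: none; exists y => N.
  apply: NNPP => no_p; apply: unbounded; exists N => p le_Np.
  by apply/negP => fpy; apply: no_p; exists p.
have [Nf HNf] := fin_all_exists bounded.
pose M := \max_y Nf y.
by have := HNf (f M) M (leq_bigmax _); rewrite eqxx.
Qed.

Lemma spaced_sequence (P : pred nat) (L n0 : nat) :
  (forall N, exists2 p, N <= p & P p) ->
  exists p : nat -> nat,
    [/\ forall a, P (p a), n0 <= p 0 & forall a b, a < b -> p a + L < p b].
Proof.
move=> infP.
have exP N : exists p, (N <= p) && P p.
  by have [p le_Np Pp] := infP N; exists p; rewrite le_Np.
pose next N := xchoose (exP N).
have nextP N : N <= next N /\ P (next N) by apply/andP; exact: (xchooseP (exP N)).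
pose p a := iter a (fun y => next (y + L).+1) (next n0).
have stepP a : p a + L < p a.+1 /\ P (p a.+1) := nextP (p a + L).+1.
exists p; split.
- by case=> [|a]; [case: (nextP n0) | case: (stepP a)].
- by case: (nextP n0).
- move=> a b; elim: b => // b IH; rewrite ltnS leq_eqVlt => /predU1P [-> | lt_ab].
    by case: (stepP b).
  by have := IH lt_ab; case: (stepP b); lia.
Qed.

Section GridEmbedding.

Variables (A : finType) (w : nat -> A) (H : rel A) (l m n : nat) (p : nat -> nat).
Hypotheses (m_gt0 : 0 < m) (grid_fits : l.+1 * m <= n).
Hypotheses (p_gt_n : forall a, n < p a)
  (p_spaced : forall a b, a < b -> p a + l.+1 < p b)
  (p_periodic : forall a t, t <= l -> w (p a + t) = w (p 0 + t)).

Lemma occurrence_inj a b s t : s <= l -> t <= l -> p a + s = p b + t -> a = b.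
Proof. by move=> le_sl le_tl; case: (ltngtP a b) => // /p_spaced; lia. Qed.

Lemma wH_adj_occurrences a b s : s < l ->
  wH_adj w H (p a + s) (p b + s.+1) = (a == b) (+) H (w (p 0 + s)) (w (p 0 + s.+1)).
Proof.
move=> lt_sl; rewrite /wH_adj !p_periodic ?(ltnW lt_sl) //.
have [<- | neq_ab] := eqVneq a b.
  by rewrite /consecutive addnS eqxx /= andbF orbF.
have far : (p a + s != p b + s.+1) && ~~ consecutive (p a + s) (p b + s.+1).
  by rewrite /consecutive; case: (ltngtP a b) neq_ab => // /p_spaced; lia.
by case/andP: far => -> /negbTE ->.
Qed.

Definition column_perm (f : {ffun 'I_l -> {perm 'I_m}}) (s : nat) : {perm 'I_m} :=
  if s is s'.+1 then oapp f 1%g (insub s') else 1%g.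

Lemma column_permS f (o : 'I_l) : column_perm f o.+1 = f o.
Proof. by rewrite /column_perm valK. Qed.

Lemma grid_index_lt s (c : 'I_m) : s <= l -> s * m + c < n.
Proof. by move=> le_sl; apply: leq_trans grid_fits; have := ltn_ord c; nia. Qed.

Definition grid_vertex s (c : 'I_m) (le_sl : s <= l) : 'I_n :=
  Ordinal (grid_index_lt c le_sl).

(* Vertex [s * m + c] of the grid goes to column [s] of the occurrence
   [column_perm f s c]; the remaining vertices [i] go to the positions [i + 1],
   all of them left of the occurrences. *)
Definition grid_embedding f (i : 'I_n) : nat :=
  if i < l.+1 * m then p (column_perm f (i %/ m) (Ordinal (ltn_pmod i m_gt0))) + i %/ m
  else i.+1.

Lemma grid_embeddingE f s c (le_sl : s <= l) :
  grid_embedding f (grid_vertex c le_sl) = p (column_perm f s c) + s.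
Proof.
have div_s : (s * m + c) %/ m = s by rewrite divnMDl // divn_small ?addn0.
have mod_c : Ordinal (ltn_pmod (s * m + c) m_gt0) = c.
  by apply: val_inj; rewrite /= modnMDl modn_small.
rewrite /grid_embedding /= mod_c div_s ifT //.
by have := ltn_ord c; nia.
Qed.

Lemma grid_embedding_inj f : injective (grid_embedding f).
Proof.
have pos_gt_n a s : n < p a + s by apply: leq_trans (leq_addr _ _).
move=> i j; rewrite /grid_embedding.
case: ifP => lt_i; case: ifP => lt_j eq_ij.
2: by move: (ltn_ord j); rewrite -eq_ij leqNgt pos_gt_n.
2: by move: (ltn_ord i); rewrite eq_ij leqNgt pos_gt_n.
2: by apply: val_inj; case: eq_ij.
have le_il : i %/ m <= l by rewrite -ltnS ltn_divLR.
have le_jl : j %/ m <= l by rewrite -ltnS ltn_divLR.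
have eq_col := occurrence_inj le_il le_jl eq_ij.
have eq_div : i %/ m = j %/ m by move: eq_ij; rewrite eq_col => /addnI.
move: eq_col; rewrite eq_div => /val_inj /perm_inj /(congr1 val) /= eq_mod.
by apply: val_inj; rewrite /= (divn_eq i m) (divn_eq j m) eq_div eq_mod.
Qed.

Definition grid_graph f : {set 'I_n * 'I_n} :=
  [set ij | (ij.1 != ij.2) && wH_adj w H (grid_embedding f ij.1) (grid_embedding f ij.2)].

Lemma grid_graph_in_P f : in_P w H (grid_graph f).
Proof.
exists (grid_embedding f); split; first exact: grid_embedding_inj.
split; last by move=> i j; rewrite inE.
move=> i; rewrite /grid_embedding; case: ifP => // _.
by rewrite addn_gt0 (leq_ltn_trans _ (p_gt_n _)).
Qed.

Lemma grid_graph_link f s (c c' : 'I_m) (lt_sl : s < l) :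
  ((grid_vertex c (ltnW lt_sl), grid_vertex c' lt_sl) \in grid_graph f) =
  (column_perm f s c == column_perm f s.+1 c') (+) H (w (p 0 + s)) (w (p 0 + s.+1)).
Proof.
have neq_cc' : grid_vertex c (ltnW lt_sl) != grid_vertex c' lt_sl.
  by rewrite -val_eqE /=; have := ltn_ord c; lia.
by rewrite inE /= neq_cc' !grid_embeddingE wH_adj_occurrences.
Qed.

Lemma grid_graph_inj : injective grid_graph.
Proof.
move=> f f' eq_g.
have link s c c' (lt_sl : s < l) : (column_perm f s c == column_perm f s.+1 c') =
    (column_perm f' s c == column_perm f' s.+1 c').
  by apply: (@addIb (H (w (p 0 + s)) (w (p 0 + s.+1)))); rewrite -!grid_graph_link eq_g.
have eq_col s : s <= l -> column_perm f s = column_perm f' s.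
  elim: s => // s IH lt_sl; apply/permP => c'.
  have := link s ((column_perm f s)^-1%g (column_perm f s.+1 c')) c' lt_sl.
  by rewrite permKV eqxx -(IH (ltnW lt_sl)) permKV => /esym/eqP.
by apply/ffunP => o; rewrite -!column_permS eq_col.
Qed.

End GridEmbedding.

Lemma many_graphs_in_P (A : finType) (w : nat -> A) (H : rel A) l m n :
  0 < m -> l.+1 * m <= n ->
  exists S : {set {set 'I_n * 'I_n}},
    (forall g, g \in S -> in_P w H g) /\ #|S| = m`! ^ l.
Proof.
move=> m_gt0 grid_fits.
pose factor q := [ffun t : 'I_l.+1 => w (q + t)].
have [x x_rec] := infinite_pigeonhole factor.
have [p [p_x p0_gt_n p_spaced]] := spaced_sequence l.+1 n.+1 x_rec.
have p_gt_n a : n < p a.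
  by case: a => [|a] //; have := p_spaced 0 a.+1 isT; lia.
have p_periodic a t : t <= l -> w (p a + t) = w (p 0 + t).
  move=> le_tl; have x_at b : w (p b + t) = x (Ordinal (le_tl : t < l.+1)).
    by move/eqP/ffunP/(_ (Ordinal (le_tl : t < l.+1))): (p_x b); rewrite ffunE.
  by rewrite !x_at.
exists [set grid_graph w H n p m_gt0 f | f : {ffun 'I_l -> {perm 'I_m}}]; split.
  by move=> g /imsetP [f _ ->]; apply: grid_graph_in_P.
rewrite card_imset; last exact: grid_graph_inj grid_fits p_spaced p_periodic.
by rewrite card_ffun card_Sn !card_ord.
Qed.

Theorem proposition3p7 (A : finType) (w : nat -> A) (H : rel A)
  (Hsym : symmetric H) :
  above_Bell (fun n g => in_P w H g).
Proof.
move=> k k_gt0; have [N HN] := bell_parameters k_gt0.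
exists N => n le_Nn; have [l [m [m_gt0 grid_fits bound]]] := HN n le_Nn.
have [S [S_in_P card_S]] := many_graphs_in_P w H m_gt0 grid_fits.
by exists S; rewrite card_S.
Qed.
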